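(* Let $g:[0,1]\to[0,1]$ be such that $g|_{\mathcal{X}_n}\in\mathcal{G}_n^{(d)}$ and $g\in C^\alpha[0,1]$ with $\alpha\ge p\ge1$, where $p$ is the order of the chosen quadrature rule, and assume $E_n^{(p)}[g]\le C_p\,2^{-pn}\|g^{(p)}\|_\infty$. Fix $\delta\in(0,1)$. To achieve total integration error $|I[g]-\hat a|\le\varepsilon$ with probability at least $1-\delta$, the following resources suffice: \[ n\ge\frac1p\log_2\Bigl(\frac{2C_p\|g^{(p)}\|_\infty}{\varepsilon}\Bigr),\qquad M\ge\frac{2C_{\mathrm{est}}}{\varepsilon\sqrt\delta},\qquad\text{gate count per oracle call}=\sum_{k=0}^{d}\binom{n}{k}. \] Substituting the minimal $n^*=\bigl\lceil\frac1p\log_2(2C_p\|g^{(p)}\|_\infty/\varepsilon)\bigr\rceil$ and taking $\delta$ a fixed constant, the total gate count across all $M$ oracle calls, as a function of $\varepsilon$ alone (for fixed $d$), is \[ \mathcal{O}\Bigl(\Bigl(\frac{\log(1/\varepsilon)}{p}\Bigr)^d\cdot\frac1\varepsilon\Bigr). \]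
   Context: $I[g]=\int_0^1g(x)\,dx$. For $n\ge1$, $\mathcal{X}_n=\{i/2^n:i=0,\dots,2^n-1\}$; $Q_n^{(p)}[g]$ denotes the approximation of $I[g]$ by a quadrature rule of order $p$ on $\mathcal{X}_n$, and $E_n^{(p)}[g]=|I[g]-Q_n^{(p)}[g]|$; $C_p>0$ is a constant depending only on $p$. The angle map of $h:\mathcal{X}_n\to[0,1]$ is $\Theta_h(b)=2\arcsin\sqrt{h(x_{i(b)})}$, $b\in\{0,1\}^n$, $i(b)=\sum_kb_k2^k$; $\mathcal{G}_n^{(d)}$ is the set of $h$ whose angle map, written as a multilinear polynomial $\sum_{S\subseteq\{0,\dots,n-1\}}c_S\prod_{j\in S}b_j$, has degree $\le d$. Quantum amplitude estimation setting: an amplitude oracle built from $g|_{\mathcal{X}_n}$ encodes the amplitude $a=Q_n^{(p)}[g]$, and each oracle call uses $\sum_{k=0}^d\binom nk$ controlled-$R_Y$ gates (the monomial factorisation of the encoding operator). The maximum-likelihood amplitude estimator $\hat a$ with total oracle cost $M$ (number of Grover-iterate applications weighted by depth) is assumed to satisfy $\mathbb{E}[(\hat a-a)^2]^{1/2}\le C_{\mathrm{est}}/M$ for a constant $C_{\mathrm{est}}>0$, hence $\mathbb{P}(|\hat a-a|\le C_{\mathrm{est}}/(M\sqrt\delta))\ge1-\delta$ for every $\delta\in(0,1)$. *)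

From HB Require Import structures.
From mathcomp Require Import all_boot all_order all_algebra.
From mathcomp Require Import all_classical all_reals all_analysis.
From mathcomp Require Import zify.
Set Implicit Arguments.
Unset Strict Implicit.
Unset Printing Implicit Defensive.
Import Order.TTheory GRing.Theory Num.Theory.
Import numFieldNormedType.Exports.
Local Open Scope classical_set_scope.
Local Open Scope ring_scope.

Section Defs.
Variable R : realType.

Definition log2 (x : R) : R := ln x / ln 2.

Definition Iint (g : R -> R) : R :=
  Rintegral lebesgue_measure `[0%R, 1%R] g.

Definition gridpt (n i : nat) : R := i%:R / (2 ^+ n).

Definition grid_restrict (g : R -> R) (n : nat) : 'I_(2 ^ n) -> R :=
  fun i => g (gridpt n i).


Definition bits_index (n : nat) (b : {ffun 'I_n -> bool}) : nat :=
  (\sum_(k < n) (b k : nat) * 2 ^ k)%N.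

Lemma bits_index_lt n (b : {ffun 'I_n -> bool}) : (bits_index b < 2 ^ n)%N.
Proof.
rewrite /bits_index; elim: n b => [|n IH] b; first by rewrite big_ord0.
rewrite big_ord_recr /= expnS.
set b' := [ffun k : 'I_n => b (widen_ord (leqnSn n) k)].
have -> : (\sum_(i < n) (b (widen_ord (leqnSn n) i) : nat) * 2 ^ i =
           \sum_(i < n) (b' i : nat) * 2 ^ i)%N.
  by apply: eq_bigr => i _; rewrite /b' ffunE.
have := IH b'; case: (b ord_max) => /=; lia.
Qed.

Definition angle_map (n : nat) (h : 'I_(2 ^ n) -> R)
  (b : {ffun 'I_n -> bool}) : R :=
  2 * asin (Num.sqrt (h (Ordinal (bits_index_lt b)))).

(* G_n^(d): the angle map, written as a multilinear polynomial
   sum_S c_S prod_{j in S} b_j, has degree <= d *)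
Definition in_G (n d : nat) (h : 'I_(2 ^ n) -> R) : Prop :=
  exists c : {set 'I_n} -> R,
    (forall S : {set 'I_n}, (d < #|S|)%N -> c S = 0) /\
    forall b : {ffun 'I_n -> bool},
      angle_map h b = \sum_(S : {set 'I_n}) c S * \prod_(j in S) (b j)%:R.

Definition Calpha (alpha : R) (g : R -> R) : Prop :=
  let k := Num.truncn alpha in
  (forall j : nat, (j <= k)%N -> {within `[0%R, 1%R], continuous (derive1n j g)}) /\
  (forall j : nat, (j < k)%N -> forall x, x \in `]0%R, 1%R[ ->
       derivable (derive1n j g) x 1) /\
  exists C : R, forall x y, x \in `[0%R, 1%R] -> y \in `[0%R, 1%R] ->
    `|derive1n k g x - derive1n k g y| <= C * powR `|x - y| (alpha - k%:R).

Definition supnorm_deriv (p : nat) (g : R -> R) : R :=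
  sup [set `|derive1n p g x| | x in `[0%R, 1%R]].

Definition gates_per_call (n d : nat) : nat := (\sum_(k < d.+1) 'C(n, k))%N.

Definition total_gates (M n d : nat) : nat := (M * gates_per_call n d)%N.

(* ceiling of a real, as a natural number (0 for negative values) *)
Definition natceil (x : R) : nat := Num.truncn ((Num.ceil x)%:~R : R).

Definition nstar (p : nat) (Cp G eps : R) : nat :=
  natceil ((p%:R)^-1 * log2 (2 * Cp * G / eps)).
Definition Mstar (Cest delta eps : R) : nat :=
  natceil (2 * Cest / (eps * Num.sqrt delta)).

End Defs.
Arguments grid_restrict {R} g n.

From HB Require Import structures.
From mathcomp Require Import all_boot all_order all_algebra.
From mathcomp Require Import all_classical all_reals all_analysis.
From mathcomp Require Import ring lra.
Set Implicit Arguments.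
Unset Strict Implicit.
Unset Printing Implicit Defensive.
Import Order.TTheory GRing.Theory Num.Theory.
Import numFieldNormedType.Exports.
Local Open Scope classical_set_scope.
Local Open Scope ring_scope.

(* The quadrature error is at most eps/2 as soon as
   2^(pn) >= 2 Cp ||g^(p)|| / eps, and on an event of probability at least
   1 - delta the estimator is within Cest / (M sqrt delta) <= eps/2 of the
   quadrature value; the triangle inequality combines the two.  For the cost,
   n* = O(log(1/eps) / p) and M* = O(1/eps), while
   sum_(k <= d) 'C(n, k) <= (d + 1) (n + 1)^d. *)

Lemma measurable_dist_le (R : realType) (dT : measure_display)
    (T : measurableType dT) (f : {mfun T >-> R}) (c r : R) :
  measurable [set w | `|f w - c| <= r].
Proof.
have -> : [set w | `|f w - c| <= r] = f @^-1` `[c - r, c + r].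
  by apply/seteqP; split => w /=; rewrite in_itv /= ler_distl.
by rewrite -[f @^-1` _]setTI; apply: measurable_funPT => //; exact: measurable_itv.
Qed.

Lemma le_measure_dist (R : realType) (dT : measure_display)
    (T : measurableType dT) (mu : {measure set T -> \bar R})
    (f : {mfun T >-> R}) (a b r e : R) :
  `|a - b| + r <= e ->
  (mu [set w | (`|f w - b| <= r)%R] <= mu [set w | (`|a - f w| <= e)%R])%E.
Proof.
move=> abre; apply: le_measure; rewrite ?inE; first exact: measurable_dist_le.
  under eq_set => w do rewrite distrC; exact: measurable_dist_le.
move=> w /= fwb; apply: le_trans (ler_distD b _ _) _.
by rewrite [`|b - _|]distrC; lra.
Qed.

Lemma le_powR2_log2 (R : realType) (x t : R) :
  0 < x -> log2 x <= t -> x <= 2 `^ t.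
Proof.
move=> x0; have ln2_gt0 : 0 < ln (2 : R) by apply: ln_gt0; lra.
by rewrite /log2 ler_pdivrMr // -ler_ln ?posrE ?powR_gt0 // ln_powR.
Qed.

Lemma quadrature_bound_le_half (R : realType) (Cp S eps t : R) :
  0 < Cp -> 0 < eps -> log2 (2 * Cp * S / eps) <= t ->
  Cp * 2 `^ (- t) * S <= eps / 2.
Proof.
move=> Cp0 eps0 ht; have pow0 : 0 < 2 `^ t :> R by apply: powR_gt0; lra.
rewrite powRN mulrAC ler_pdivrMr //.
have rhs0 : 0 < eps / 2 * 2 `^ t by rewrite !mulr_gt0 // invr_gt0; lra.
have [S0|S0] := leP S 0.
  suff : Cp * S <= 0 by lra.
  by rewrite pmulr_rle0.
have x0 : 0 < 2 * Cp * S / eps by rewrite divr_gt0 // !mulr_gt0.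
have := le_powR2_log2 x0 ht.
by rewrite ler_pdivrMr //; lra.
Qed.

Lemma estimator_radius_le_half (R : realType) (Cest delta eps : R) (M : nat) :
  0 < Cest -> 0 < delta -> 0 < eps ->
  2 * Cest / (eps * Num.sqrt delta) <= M%:R ->
  Cest / (M%:R * Num.sqrt delta) <= eps / 2.
Proof.
move=> Cest0 delta0 eps0; have sd0 : 0 < Num.sqrt delta by rewrite sqrtr_gt0.
rewrite ler_pdivrMr ?mulr_gt0 // => hM.
have M0 : 0 < M%:R :> R.
  rewrite ltr0n lt0n; apply/eqP => M_eq0; move: hM; rewrite M_eq0 mul0r; lra.
rewrite ler_pdivrMr ?mulr_gt0 //; lra.
Qed.

Lemma natceil_le (R : realType) (x : R) : 0 <= x -> (natceil x)%:R <= x + 1.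
Proof.
move=> x0; rewrite /natceil.
have ceil0 : 0 <= (Num.ceil x)%:~R :> R by rewrite ler0z ceil_ge0; lra.
apply: le_trans (_ : (Num.ceil x)%:~R <= _); first by rewrite truncn_le.
by have /andP[+ _] := ceil_itv x; rewrite intrD; lra.
Qed.

Lemma bin_le_expn (n k : nat) : ('C(n, k) <= n ^ k)%N.
Proof.
have ffact_le : (n ^_ k <= n ^ k)%N.
  rewrite ffact_prod; apply: leq_trans (_ : \prod_(i < k) n <= _)%N.
    by apply: leq_prod => i _; exact: leq_subr.
  by rewrite prod_nat_const card_ord.
by apply: leq_trans ffact_le; rewrite -bin_ffact leq_pmulr ?fact_gt0.
Qed.

Lemma gates_per_call_le (n d : nat) :
  (gates_per_call n d <= d.+1 * n.+1 ^ d)%N.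
Proof.
rewrite /gates_per_call -[X in (_ <= X * _)%N]card_ord -sum_nat_const.
apply: leq_sum => k _; apply: leq_trans (bin_le_expn n k) _.
apply: leq_trans (_ : n.+1 ^ k <= _)%N.
  by have [->|k_gt0] := posnP k; rewrite ?expn0 ?leq_exp2r.
by rewrite leq_pexp2l // -ltnS.
Qed.

Lemma near0_le_ln_inv (R : realType) (c : R) :
  \forall x \near 0^'+, c <= ln x^-1.
Proof.
near=> x.
have x0 : 0 < x by near: x; exact: nbhs_right_gt.
have : x <= expR (- c) by near: x; apply: nbhs_right_le; exact: expR_gt0.
by rewrite -ler_ln ?posrE ?expR_gt0 // expRK lnV ?posrE //; lra.
Unshelve. all: end_near.
Qed.

Section GateCount.
Variables (R : realType) (p d : nat) (Cp Cest delta S : R).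
Hypotheses (p_gt0 : (0 < p)%N) (Cest_ge0 : 0 <= Cest) (delta_gt0 : 0 < delta).

Lemma Mstar_le (eps : R) : 0 < eps <= 1 ->
  (Mstar Cest delta eps)%:R <= (2 * Cest / Num.sqrt delta + 1) / eps.
Proof.
rewrite /Mstar => /andP[eps0 eps1]; have sd0 : 0 < Num.sqrt delta by rewrite sqrtr_gt0.
have -> : 2 * Cest / (eps * Num.sqrt delta) = 2 * Cest / Num.sqrt delta / eps.
  by rewrite invfM mulrA mulrAC.
have B0 : 0 <= 2 * Cest / Num.sqrt delta by rewrite divr_ge0 ?sqrtr_ge0 ?mulr_ge0 ?ler0n.
apply: le_trans (natceil_le (divr_ge0 B0 (ltW eps0))) _.
by rewrite [X in _ <= X]mulrDl lerD2l ler_pdivlMr // mul1r.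
Qed.

Lemma nstar_succ_le (eps : R) : 0 < eps ->
  `|ln (2 * Cp * S)| + 1 <= ln eps^-1 ->
  (nstar p Cp S eps).+1%:R <= (2 / ln 2 + 2 * p%:R) * (ln eps^-1 / p%:R).
Proof.
move=> eps0; set L := ln eps^-1 => hL.
have p0 : 0 < p%:R :> R by rewrite ltr0n.
have ln2_gt0 : 0 < ln (2 : R) by apply: ln_gt0; lra.
have /andP[lnA0 lnAL] : 0 <= ln (2 * Cp * S / eps) <= 2 * L.
  have [a0|a0] := ltP 0 (2 * Cp * S).
    rewrite lnM ?posrE ?invr_gt0 // -/L.
    have : - `|ln (2 * Cp * S)| <= ln (2 * Cp * S) <= `|ln (2 * Cp * S)|.
      by rewrite -ler_norml.
    by move=> /andP[? ?]; apply/andP; split; lra.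
  rewrite ln0; last by rewrite mulr_le0_ge0 // invr_ge0 ltW.
  by have := normr_ge0 (ln (2 * Cp * S)); lra.
set x := p%:R^-1 * log2 (2 * Cp * S / eps).
have x0 : 0 <= x by rewrite mulr_ge0 ?invr_ge0 ?ler0n ?divr_ge0 // ltW.
have xL : x <= 2 / ln 2 * (L / p%:R).
  have -> : 2 / ln 2 * (L / p%:R) = p%:R^-1 * (2 * L / ln 2) by ring.
  by rewrite ler_pM2l ?invr_gt0 // ler_pM2r ?invr_gt0.
have pL : 2 <= 2 * p%:R * (L / p%:R).
  rewrite (_ : 2 * p%:R * _ = 2 * L); last by field; rewrite lt0r_neq0.
  by have := normr_ge0 (ln (2 * Cp * S)); lra.
by have := natceil_le x0; rewrite /nstar -/x -natr1 mulrDl; lra.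
Qed.

Lemma total_gates_le (eps : R) : 0 < eps ->
  `|ln (2 * Cp * S)| + 1 <= ln eps^-1 ->
  (total_gates (Mstar Cest delta eps) (nstar p Cp S eps) d)%:R
    <= (2 * Cest / Num.sqrt delta + 1) * d.+1%:R * (2 / ln 2 + 2 * p%:R) ^+ d
       * ((ln eps^-1 / p%:R) ^+ d / eps).
Proof.
move=> eps0 hL; set n := nstar p Cp S eps.
have eps1 : eps <= 1.
  rewrite -invf_ge1 //; apply: ltW; rewrite ltNge; apply/negP => /ln_le0.
  by have := normr_ge0 (ln (2 * Cp * S)); lra.
have hM := Mstar_le (introT andP (conj eps0 eps1)).
have hn := nstar_succ_le eps0 hL.
have hG : (gates_per_call n d)%:R
    <= d.+1%:R * ((2 / ln 2 + 2 * p%:R) * (ln eps^-1 / p%:R)) ^+ d.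
  apply: le_trans (_ : (d.+1 * n.+1 ^ d)%:R <= _).
    by rewrite ler_nat gates_per_call_le.
  by rewrite natrM natrX ler_wpM2l ?ler0n // lerXn2r ?nnegrE ?ler0n //;
    exact: le_trans hn.
rewrite /total_gates natrM.
apply: le_trans (ler_pM (ler0n _ _) (ler0n _ _) hM hG) _.
by rewrite exprMn; lra.
Qed.

Lemma total_gates_bigO :
  (fun eps => (total_gates (Mstar Cest delta eps) (nstar p Cp S eps) d)%:R : R)
    =O_ (0^'+) (fun eps => (ln eps^-1 / p%:R) ^+ d / eps).
Proof.
have ln2_gt0 : 0 < ln (2 : R) by apply: ln_gt0; lra.
have B0 : 0 <= 2 * Cest / Num.sqrt delta by rewrite divr_ge0 ?sqrtr_ge0 ?mulr_ge0 ?ler0n.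
have K0 : 0 < 2 / ln 2 + 2 * p%:R :> R.
  by rewrite ltr_pwDl ?mulr_ge0 ?ler0n ?divr_gt0.
pose c := (2 * Cest / Num.sqrt delta + 1) * d.+1%:R * (2 / ln 2 + 2 * p%:R) ^+ d.
have c_gt0 : 0 < c by rewrite !mulr_gt0 ?exprn_gt0 ?ltr0Sn //; lra.
apply/eqO_exP; exists c => //; near=> eps.
have eps0 : 0 < eps by near: eps; exact: nbhs_right_gt.
have hL : `|ln (2 * Cp * S)| + 1 <= ln eps^-1 by near: eps; exact: near0_le_ln_inv.
rewrite ger0_norm ?ler0n //; apply: le_trans (total_gates_le eps0 hL) _.
by rewrite ler_wpM2l ?ler_norm ?ltW.
Unshelve. all: end_near.
Qed.

End GateCount.

Theorem mainTheorem4 (R : realType) (p d : nat) (alpha Cp Cest delta : R)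
  (g : R -> R) (Q : nat -> (R -> R) -> R) :
  (1 <= p)%N -> p%:R <= alpha -> 0 < Cp -> 0 < Cest -> 0 < delta < 1 ->
  (forall x, x \in `[0, 1] -> 0 <= g x <= 1) ->
  Calpha alpha g ->
  (* (1) sufficient resources *)
  (forall (eps : R) (n M : nat), 0 < eps -> (1 <= n)%N ->
     in_G d (grid_restrict g n) ->
     `|Iint g - Q n g| <= Cp * 2 `^ (- (p%:R * n%:R)) * supnorm_deriv p g ->
     (p%:R)^-1 * log2 (2 * Cp * supnorm_deriv p g / eps) <= n%:R ->
     2 * Cest / (eps * Num.sqrt delta) <= M%:R ->
     forall (dT : measure_display) (T : measurableType dT)
            (P : probability T R) (ahat : {RV P >-> R}),
       (forall delta' : R, 0 < delta' < 1 ->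
          ((1 - delta')%:E <=
           P [set w | (`|ahat w - Q n g| <= Cest / (M%:R * Num.sqrt delta'))%R])%E) ->
       ((1 - delta)%:E <= P [set w | (`|Iint g - ahat w| <= eps)%R])%E)
  /\
  (* (2) total gate count with minimal n*, M*, as eps -> 0+ *)
  (fun eps : R =>
     (total_gates (Mstar Cest delta eps)
                  (nstar p Cp (supnorm_deriv p g) eps) d)%:R : R)
    =O_ (0^'+) (fun eps : R => (ln (eps^-1) / p%:R) ^+ d / eps).
Proof.
(* Smoothness of g and the degree of its angle map enter only through the
   assumed quadrature error bound and the definition of the gate count. *)
move=> p_gt0 _ Cp0 Cest0 /andP[delta0 delta1] _ _; split; last first.
  exact: total_gates_bigO (ltW Cest0) delta0.
move=> eps n M eps0 _ _ quad_err hn hM dT T P ahat ahat_conc.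
have quad_half : `|Iint g - Q n g| <= eps / 2.
  apply: le_trans quad_err (quadrature_bound_le_half Cp0 eps0 _).
  by rewrite -ler_pdivrMl ?ltr0n.
apply: le_trans (ahat_conc delta (introT andP (conj delta0 delta1))) _.
apply: le_measure_dist.
by have := estimator_radius_le_half Cest0 delta0 eps0 hM; lra.
Qed.
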